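(* Let $G$ be a graph on $d+2$ vertices, $k>1$, and $\overline{B_G} = \frac{1}{k^2-1}(B_G(k) + J) = \frac{1}{k^2-1} I - A_G$. Then $G$ has a spherical representation in $\mathbb{R}^d$ with distance ratio $k$ if and only if all of the following hold: (i) $w^T \overline{B_G} w \geq 0$ for all $w \in \mathbf{1}^{\perp}$; (ii) there exist a nonzero $w \in \mathbf{1}^{\perp}$ and a real $\gamma$ with $\overline{B_G} w = \gamma \mathbf{1}$; (iii) $\det(\overline{B_G}) = 0$; (iv) there exists $r_0 \in \mathbb{R}$ such that $rJ + \overline{B_G}$ is positive semidefinite for all $r \geq r_0$.
   Context: Graphs are finite and simple with vertices labeled $1,\dots,d+2$; $A_G$ is the adjacency matrix. A finite set $S\subset\mathbb{R}^d$ is a 2-distance set if $\{\|p-q\| : p,q\in S, p\neq q\}$ has exactly two elements $\alpha_1>\alpha_2$; its distance ratio is $k=\alpha_1/\alpha_2$; its associated graph has vertex set $S$ with $p,q$ adjacent iff $\|p-q\|=\alpha_1$. $G$ has a spherical representation in $\mathbb{R}^d$ with ratio $k$ if some 2-distance set in $\mathbb{R}^d$ with ratio $k$, lying on a $(d-1)$-dimensional sphere, has associated graph $G$. $B_G(k)$ is the matrix with $b_{ii}=0$, $b_{ij}=-1$ for non-adjacent $i\neq j$, $b_{ij}=-k^2$ for adjacent $i,j$. $J$ is the all-ones matrix, $\mathbf{1}$ the all-ones vector, $\mathbf{1}^\perp$ its orthogonal complement. *)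

From HB Require Import structures.
From mathcomp Require Import all_boot all_order all_algebra.
From mathcomp Require Import reals.
Set Implicit Arguments. Unset Strict Implicit. Unset Printing Implicit Defensive.
Import Order.TTheory GRing.Theory Num.Theory.
Local Open Scope ring_scope.

Section Defs.
Variable R : realType.

Definition edist (d : nat) (p q : 'rV[R]_d) : R :=
  Num.sqrt (\sum_(i < d) (p 0 i - q 0 i) ^+ 2).

Definition on_sphere (d n : nat) (p : 'I_n -> 'rV[R]_d) : Prop :=
  exists (c : 'rV[R]_d) (rho : R), 0 < rho /\ forall i, edist (p i) c = rho.

(* The labeled point family p (S = image of p, |S| = n) is a 2-distance set
   whose distance set is exactly {a1, a2} with a1 > a2. *)
Definition two_distance (d n : nat) (p : 'I_n -> 'rV[R]_d) (a1 a2 : R) : Prop :=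
  [/\ injective p, a2 < a1,
      (forall i j, i != j -> edist (p i) (p j) = a1 \/ edist (p i) (p j) = a2),
      (exists i j, i != j /\ edist (p i) (p j) = a1) &
      (exists i j, i != j /\ edist (p i) (p j) = a2)].

Definition spherical_rep (d : nat) (G : rel 'I_(d.+2)) (k : R) : Prop :=
  exists (p : 'I_(d.+2) -> 'rV[R]_d) (a1 a2 : R),
    [/\ two_distance p a1 a2, a1 / a2 = k, on_sphere p &
        (forall i j, i != j -> (G i j <-> edist (p i) (p j) = a1))].

Definition adjmx (n : nat) (G : rel 'I_n) : 'M[R]_n :=
  \matrix_(i, j) (G i j)%:R.

Definition Bmx (n : nat) (G : rel 'I_n) (k : R) : 'M[R]_n :=
  \matrix_(i, j) (if i == j then 0 else if G i j then - k ^+ 2 else -1).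

Definition Jmx (n : nat) : 'M[R]_n := const_mx 1.
Definition ones (n : nat) : 'cV[R]_n := const_mx 1.

Definition Bbar (n : nat) (G : rel 'I_n) (k : R) : 'M[R]_n :=
  (k ^+ 2 - 1)^-1 *: (Bmx G k + Jmx n).

Definition perp1 (n : nat) (w : 'cV[R]_n) : Prop := (ones n)^T *m w = 0.

Definition qform (n : nat) (M : 'M[R]_n) (w : 'cV[R]_n) : R := (w^T *m M *m w) 0 0.

Definition psd (n : nat) (M : 'M[R]_n) : Prop :=
  M^T = M /\ forall x : 'cV[R]_n, 0 <= qform M x.

End Defs.

From HB Require Import structures.
From mathcomp Require Import all_boot all_order all_algebra.
From mathcomp Require Import reals.
From mathcomp Require Import ring lra zify.
Import Order.TTheory GRing.Theory Num.Theory.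
Set Implicit Arguments. Unset Strict Implicit. Unset Printing Implicit Defensive.
Local Open Scope ring_scope.

(* Up to a multiple of J, Bbar is the Gram matrix of a spherical representation:
   if the points p_i lie on a sphere of radius rho around c, at mutual distances
   a2 and k a2, then the matrix of the (p_i - c).(p_j - c) equals
   beta (r J + Bbar) with beta = a2^2 (k^2 - 1) / 2 and r = (rho^2 - a2^2/2) / beta.
   So G has a spherical representation in R^d iff r J + Bbar = X X^T for some r
   and some (d+2) x d matrix X.  Such a factorization gives (i) and (iv), and a
   common kernel vector of X^T and 1^T, which exists because X has only d
   columns, gives (ii) and (iii).  Conversely, by (ii) and (iv) the psd matrix
   F = r0 J + Bbar kills w; subtracting a suitable multiple of J keeps it psd and
   puts into its kernel a vector y with 1^T y <> 0, so its rank is at most d and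
   an LDL^T factorization of it produces X. *)

Lemma mx11_eq0 (V : nmodType) (A : 'M[V]_1) : (A 0 0 == 0) = (A == 0).
Proof.
by apply/eqP/eqP => [A0|->]; [rewrite [A]mx11_scalar A0 raddf0 | rewrite mxE].
Qed.

Section KernelRange.
Variable F : fieldType.

Lemma exists_ker_neq0 m n (A : 'M[F]_(m, n)) : (m < n)%N ->
  exists2 w : 'cV[F]_n, w != 0 & A *m w = 0.
Proof.
move=> lt_mn; have : kermx A^T != 0.
  by rewrite kermx_eq0 /row_free mxrank_tr ltn_eqF // (leq_ltn_trans (rank_leq_row A)).
case/rowV0Pn => v /sub_kermxP vA v_neq0; exists v^T; first by rewrite trmx_eq0.
by rewrite -[A]trmxK -trmx_mul vA trmx0.
Qed.

Lemma range_or_ker m n (A : 'M[F]_(m, n)) (b : 'cV[F]_n) :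
  (exists z : 'cV_m, A^T *m z = b) \/ (exists2 y : 'cV_n, A *m y = 0 & b^T *m y != 0).
Proof.
have [/submxP [D bD] | ] := boolP (b^T <= A)%MS.
  by left; exists D^T; rewrite -trmx_mul -bD trmxK.
rewrite submxE => bC_neq0; right.
have /existsP [j bCj] : [exists j, col j (b^T *m cokermx A) != 0].
  apply: contraR bC_neq0 => /existsPn bC0; apply/eqP/matrixP => i j.
  by have /negPn/eqP/matrixP/(_ i 0) := bC0 j; rewrite !mxE.
exists (col j (cokermx A)); last by rewrite colE mulmxA -colE.
by rewrite colE mulmxA mulmx_coker mul0mx.
Qed.

Lemma det_eq0_ker n (A : 'M[F]_n) (w : 'cV[F]_n) : w != 0 -> A *m w = 0 -> \det A = 0.
Proof.
move=> w_neq0 Aw0; apply/eqP; apply: contraNT w_neq0 => det_neq0.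
have uA : A \in unitmx by rewrite unitmxE unitfE.
by rewrite -(mulKmx uA w) Aw0 mulmx0.
Qed.

End KernelRange.

Section PsdMatrices.
Variable R : realType.
Implicit Types (n m : nat) (a t : R).

Lemma dot_self_ge0 n (v : 'cV[R]_n) : 0 <= (v^T *m v) 0 0.
Proof. by rewrite mxE; apply: sumr_ge0 => i _; rewrite mxE -expr2 sqr_ge0. Qed.

Lemma dot_self_eq0 n (v : 'cV[R]_n) : ((v^T *m v) 0 0 == 0) = (v == 0).
Proof.
apply/idP/eqP => [|->]; last by rewrite mulmx0 mxE.
rewrite mxE psumr_eq0 => [/allP v0|i _]; last by rewrite mxE -expr2 sqr_ge0.
apply/matrixP => i j; rewrite ord1 !mxE.
by have /implyP/(_ isT) := v0 i (mem_index_enum _); rewrite mxE -expr2 sqrf_eq0 => /eqP.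
Qed.

Lemma dot1 (v : 'cV[R]_1) : (v^T *m v) 0 0 = v 0 0 ^+ 2.
Proof. by rewrite mxE big_ord1 mxE expr2. Qed.

Lemma dotC n (u v : 'cV[R]_n) : (u^T *m v) 0 0 = (v^T *m u) 0 0.
Proof. by rewrite -[v^T *m u]trmxK trmx_mul trmxK [RHS]mxE. Qed.

Lemma qformD n (A B : 'M[R]_n) x : qform (A + B) x = qform A x + qform B x.
Proof. by rewrite /qform mulmxDr mulmxDl mxE. Qed.

Lemma qformB n (A B : 'M[R]_n) x : qform (A - B) x = qform A x - qform B x.
Proof. by rewrite /qform mulmxBr mulmxBl mxE [(- _ : 'M_1) _ _]mxE. Qed.

Lemma qformZ n a (A : 'M[R]_n) x : qform (a *: A) x = a * qform A x.
Proof. by rewrite /qform -scalemxAr -scalemxAl mxE. Qed.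

Lemma qformZr n (M : 'M[R]_n) t x : qform M (t *: x) = t ^+ 2 * qform M x.
Proof. by rewrite /qform -scalemxAr [(t *: x)^T]linearZ /= -!scalemxAl scalerA mxE expr2. Qed.

Lemma qform_gram n m (X : 'M[R]_(n, m)) x :
  qform (X *m X^T) x = ((X^T *m x)^T *m (X^T *m x)) 0 0.
Proof. by rewrite /qform trmx_mul trmxK !mulmxA. Qed.

Lemma qform_shift n (M : 'M[R]_n) x y t : M^T = M ->
  qform M (x + t *: y) = qform M x + 2 * t * (x^T *m M *m y) 0 0 + t ^+ 2 * qform M y.
Proof.
move=> sM; have yMx : (y^T *m M *m x) 0 0 = (x^T *m M *m y) 0 0.
  by rewrite -mulmxA dotC trmx_mul sM.
rewrite /qform [(_ + _)^T]linearD /= [(_ *: _)^T]linearZ /=.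
rewrite !mulmxDl !mulmxDr -!scalemxAl -!scalemxAr.
by rewrite ![(_ + _ : 'M_1) _ _]mxE ![(_ *: _ : 'M_1) _ _]mxE yMx; ring.
Qed.

Lemma JmxE n : Jmx R n = ones R n *m (ones R n)^T.
Proof. by apply/matrixP => i j; rewrite !mxE big_ord1 !mxE mulr1. Qed.

Lemma qformJ n x : qform (Jmx R n) x = ((ones R n)^T *m x) 0 0 ^+ 2.
Proof. by rewrite JmxE qform_gram dot1. Qed.

Lemma psd_gram n m (X : 'M[R]_(n, m)) : psd (X *m X^T).
Proof. by split=> [|x]; rewrite ?trmx_mul ?trmxK // qform_gram dot_self_ge0. Qed.

Lemma psdD n (A B : 'M[R]_n) : psd A -> psd B -> psd (A + B).
Proof.
by move=> [sA pA] [sB pB]; split=> [|x]; rewrite ?linearD /= ?sA ?sB // qformD addr_ge0.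
Qed.

Lemma psdZ n a (A : 'M[R]_n) : 0 <= a -> psd A -> psd (a *: A).
Proof.
by move=> a0 [sA pA]; split=> [|x]; rewrite ?linearZ /= ?sA // qformZ mulr_ge0.
Qed.

Lemma psdJ n : psd (Jmx R n).
Proof. by rewrite JmxE; apply: psd_gram. Qed.

Lemma quadratic_ge0_coef1 a b : 0 <= a -> (forall t, 0 <= 2 * t * b + t ^+ 2 * a) -> b = 0.
Proof.
move=> a0 ge0; set u := b / (a + 1).
have bE : b = u * (a + 1) by rewrite divfK // gt_eqF // ltr_wpDl.
have := ge0 (- u); rewrite bE => H.
suff -> : u = 0 by rewrite mul0r.
nra.
Qed.

Lemma psd_qform_eq0 n (M : 'M[R]_n) x : psd M -> qform M x = 0 -> M *m x = 0.
Proof.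
move=> [sM pM] qx0; apply/eqP; rewrite -dot_self_eq0; apply/eqP.
apply: (quadratic_ge0_coef1 (pM (M *m x))) => t.
have := pM (x + t *: (M *m x)); rewrite qform_shift // qx0 add0r.
by rewrite [(M *m x)^T]trmx_mul sM.
Qed.

Lemma qform_block n a t (q x : 'cV[R]_n) (P : 'M[R]_n) :
  qform (block_mx a%:M q^T q P : 'M_(1 + n)) (col_mx t%:M x) =
  a * t ^+ 2 + 2 * t * (q^T *m x) 0 0 + qform P x.
Proof.
rewrite /qform tr_col_mx tr_scalar_mx mul_row_block mul_row_col !mulmxDl.
rewrite -scalar_mxM !mul_scalar_mx !mul_mx_scalar -scalemxAl.
rewrite ![(_ + _ : 'M_1) _ _]mxE ![(_ *: _ : 'M_1) _ _]mxE mxE (dotC x) mulr1n; ring.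
Qed.

Lemma sym_blockE n (P : 'M[R]_(1 + n)) : P^T = P ->
  P = block_mx (P 0 0)%:M (dlsubmx P)^T (dlsubmx P) (drsubmx P).
Proof.
have l0 : lshift n (0 : 'I_1) = 0 by apply: val_inj.
move=> sP; rewrite -{1}(submxK P) trmx_dlsub sP [ulsubmx P]mx11_scalar.
by rewrite [ulsubmx P 0 0]mxE [usubmx P _ _]mxE l0.
Qed.

Lemma psd_block n a (q : 'cV[R]_n) (P : 'M[R]_n) :
  psd (block_mx a%:M q^T q P : 'M_(1 + n)) -> [/\ 0 <= a, psd P & a = 0 -> q = 0].
Proof.
move=> [sB pB]; have {}pB t x : 0 <= a * t ^+ 2 + 2 * t * (q^T *m x) 0 0 + qform P x.
  by rewrite -qform_block.
have sP : P^T = P by rewrite -[P](block_mxKdr a%:M q^T q) trmx_drsub sB.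
have pP x : 0 <= qform P x.
  by have := pB 0 x; rewrite expr0n /= !mulr0 !mul0r !add0r.
split=> // [|a0].
  by have := pB 1 0; rewrite /qform !mulmx0 !mxE expr1n mulr1; lra.
apply/eqP; rewrite -dot_self_eq0; apply/eqP.
apply: (quadratic_ge0_coef1 (pP q)) => u; have := pB 1 (u *: q).
by rewrite -scalemxAr [(_ *: _ : 'M_1) _ _]mxE qformZr a0 mul0r add0r mulr1 mulrA.
Qed.

Lemma psd_schur n a (q : 'cV[R]_n) (P : 'M[R]_n) : 0 < a ->
  psd (block_mx a%:M q^T q P : 'M_(1 + n)) -> psd (P - a^-1 *: (q *m q^T)).
Proof.
move=> a_gt0 psdB; have [_ [sP _] _] := psd_block psdB; have [_ pB] := psdB.
split=> [|x]; first by rewrite linearB /= linearZ /= trmx_mul trmxK sP.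
have := pB (col_mx (- a^-1 * (q^T *m x) 0 0)%:M x).
rewrite qform_block qformB qformZ qform_gram dot1.
set s := (q^T *m x) 0 0; set Q := qform P x.
suff -> : a * (- a^-1 * s) ^+ 2 + 2 * (- a^-1 * s) * s + Q = Q - a^-1 * s ^+ 2 by [].
by field; rewrite gt_eqF.
Qed.

Lemma block_ldl n a (q : 'cV[R]_n) (P : 'M[R]_n) : a != 0 ->
  let L : 'M_(1 + n) := block_mx 1%:M 0 (a^-1 *: q) 1%:M in
  block_mx a%:M q^T q P = L *m block_mx a%:M 0 0 (P - a^-1 *: (q *m q^T)) *m L^T.
Proof.
move=> a0 L; rewrite /L tr_block_mx !trmx1 trmx0 !mulmx_block.
rewrite !mul1mx !mulmx1 !mul0mx !mulmx0 !addr0 !add0r.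
rewrite mul_scalar_mx mul_mx_scalar linearZ /= !scalerA mulfV // !scale1r.
by rewrite -scalemxAr addrC subrK.
Qed.

Lemma rank_block_schur n a (q : 'cV[R]_n) (P : 'M[R]_n) : a != 0 ->
  \rank (block_mx a%:M q^T q P : 'M_(1 + n)) = (\rank (P - a^-1 *: (q *m q^T))).+1.
Proof.
move=> a0; rewrite (block_ldl _ _ a0) /=.
set L := block_mx _ _ _ _.
have uL : L \in unitmx by rewrite unitmxE det_lblock !det1 mulr1 unitr1.
rewrite mxrankMfree ?row_free_unit ?unitmx_tr // -mxrank_tr trmx_mul.
rewrite mxrankMfree ?row_free_unit ?unitmx_tr // mxrank_tr rank_diag_block_mx.
by rewrite rank_rV -mx11_eq0 mxE mulr1n a0.
Qed.

Lemma psd_factor n m (P : 'M[R]_n) : psd P -> (\rank P <= m)%N ->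
  exists X : 'M[R]_(n, m), P = X *m X^T.
Proof.
elim: n m P => [|n IH] m; first by exists 0; apply/matrixP => -[].
rewrite -[n.+1]/(1 + n)%N => P psdP.
have PE := sym_blockE psdP.1; move: psdP; rewrite {}PE.
move: (P 0 0) (dlsubmx P) (drsubmx P) => a q {}P psdB rkB.
have [a_ge0 psdP q0] := psd_block psdB.
have [a0 | a_neq0] := eqVneq a 0.
  rewrite a0 (q0 a0) trmx0 raddf0 in rkB *.
  rewrite rank_diag_block_mx mxrank0 in rkB.
  have [X ->] := IH m P psdP rkB.
  exists (col_mx 0 X).
  by rewrite tr_col_mx mul_col_row !mul0mx trmx0 mulmx0.
have a_gt0 : 0 < a by rewrite lt_def a_neq0.
case: m rkB => [|m]; first by rewrite rank_block_schur.
rewrite rank_block_schur // ltnS => rkS.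
have [Y YE] := IH m _ (psd_schur a_gt0 psdB) rkS.
pose D : 'M_(1 + n, 1 + m) := block_mx (Num.sqrt a)%:M 0 0 Y.
have DDt : D *m D^T = block_mx a%:M 0 0 (P - a^-1 *: (q *m q^T)).
  rewrite /D tr_block_mx mulmx_block !trmx0 tr_scalar_mx !mul0mx !mulmx0 !addr0 !add0r.
  by rewrite -scalar_mxM -expr2 sqr_sqrtr ?ltW // YE.
exists (block_mx 1%:M 0 (a^-1 *: q) 1%:M *m D).
by rewrite (block_ldl _ _ a_neq0) /= -DDt trmx_mul !mulmxA.
Qed.

(* If b is orthogonal to ker F then b = F z, and subtracting (b^T z)^-1 b b^T
   keeps F psd (Cauchy-Schwarz for the semi-inner product of F) and kills z. *)
Lemma psd_sub_rank1_ker n (F : 'M[R]_n) (b : 'cV[R]_n) : psd F -> b != 0 ->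
  exists t (y : 'cV[R]_n),
    [/\ psd (F - t *: (b *m b^T)), (F - t *: (b *m b^T)) *m y = 0 & b^T *m y != 0].
Proof.
move=> psdF b_neq0; have [sF pF] := psdF.
have [[z]|[y Fy by_neq0]] := range_or_ker F b; last first.
  by exists 0, y; rewrite scale0r subr0.
rewrite sF => Fz; set s := (b^T *m z) 0 0.
have qFz : qform F z = s by rewrite /qform -mulmxA Fz dotC.
have s_neq0 : s != 0.
  by apply: contraNneq b_neq0 => s0; rewrite -Fz psd_qform_eq0 // qFz.
have s_gt0 : 0 < s by rewrite lt_def s_neq0 -qFz pF.
exists s^-1, z; split.
- split=> [|x]; first by rewrite linearB /= linearZ /= trmx_mul trmxK sF.
  rewrite qformB qformZ qform_gram dot1; set e := (b^T *m x) 0 0.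
  have := pF (x + (- (e / s)) *: z).
  rewrite qform_shift // qFz -mulmxA Fz dotC -/e.
  suff -> : qform F x + 2 * - (e / s) * e + (- (e / s)) ^+ 2 * s =
            qform F x - s^-1 * e ^+ 2 by [].
  by field.
- by rewrite mulmxBl Fz -scalemxAl -mulmxA [b^T *m z]mx11_scalar mul_mx_scalar
    scalerA mulVf // scale1r subrr.
- by rewrite -mx11_eq0.
Qed.

Lemma row_free_col_pair n (w y b : 'cV[R]_n) :
  w != 0 -> b^T *m w = 0 -> b^T *m y != 0 -> row_free (col_mx w^T y^T).
Proof.
move=> w_neq0 bw by_neq0.
have wb : w^T *m b = 0 by rewrite -[w^T *m b]trmxK trmx_mul trmxK bw trmx0.
have U : col_mx w^T y^T *m row_mx w b \in unitmx.
  rewrite mul_col_row wb unitmxE det_lblock !det_mx11 unitfE mulf_neq0 //.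
    by rewrite dot_self_eq0.
  by rewrite dotC mx11_eq0.
by rewrite /row_free eqn_leq rank_leq_row -{1}(mxrank_unit U) mxrankM_maxl.
Qed.

End PsdMatrices.

Section Gram.
Variable R : realType.
Implicit Types (n m : nat).

Lemma gram_diagE n m (X : 'M[R]_(n, m)) i : (X *m X^T) i i = \sum_l X i l ^+ 2.
Proof. by rewrite mxE; apply: eq_bigr => l _; rewrite mxE expr2. Qed.

Lemma gram_diag_eq0 n m (X : 'M[R]_(n, m)) i j :
  (X *m X^T) i i = 0 -> (X *m X^T) i j = 0.
Proof.
rewrite gram_diagE => /eqP; rewrite psumr_eq0 => [/allP Xi0|l _]; last exact: sqr_ge0.
rewrite mxE big1 // => l _; have /implyP/(_ isT) := Xi0 l (mem_index_enum _).
by rewrite sqrf_eq0 => /eqP ->; rewrite mul0r.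
Qed.

Lemma gram_sqdist n m (X : 'M[R]_(n, m)) i j :
  \sum_l (X i l - X j l) ^+ 2 = (X *m X^T) i i + (X *m X^T) j j - 2 * (X *m X^T) i j.
Proof.
rewrite !mxE mulr_sumr -sumrN -!big_split /=.
by apply: eq_bigr => l _; rewrite !mxE; ring.
Qed.

Lemma edist_self d (p : 'rV[R]_d) : edist p p = 0.
Proof. by rewrite /edist big1 ?sqrtr0 // => l _; rewrite subrr expr0n. Qed.

Lemma sqr_edist d (p q : 'rV[R]_d) : edist p q ^+ 2 = \sum_l (p 0 l - q 0 l) ^+ 2.
Proof. by rewrite sqr_sqrtr // sumr_ge0 // => l _; apply: sqr_ge0. Qed.

Lemma edist_rows n m (X : 'M[R]_(n, m)) i j :
  edist (row i X) (row j X) =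
  Num.sqrt ((X *m X^T) i i + (X *m X^T) j j - 2 * (X *m X^T) i j).
Proof. by rewrite /edist -gram_sqdist; under eq_bigr do rewrite !mxE. Qed.

Lemma edist_row0 n m (X : 'M[R]_(n, m)) i : edist (row i X) 0 = Num.sqrt ((X *m X^T) i i).
Proof. by rewrite /edist gram_diagE; under eq_bigr do rewrite !mxE subr0. Qed.

Lemma sphere_gram d n (p : 'I_n -> 'rV[R]_d) (c : 'rV[R]_d) rho :
  (forall i, edist (p i) c = rho) ->
  let X := \matrix_(i, l) (p i 0 l - c 0 l) in
  forall i j, (X *m X^T) i j = rho ^+ 2 - edist (p i) (p j) ^+ 2 / 2.
Proof.
move=> onc X i j; have Xii l : (X *m X^T) l l = rho ^+ 2.
  by rewrite -(onc l) sqr_edist gram_diagE; under eq_bigr do rewrite mxE.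
have : edist (p i) (p j) ^+ 2 = \sum_l (X i l - X j l) ^+ 2.
  by rewrite sqr_edist; apply: eq_bigr => l _; rewrite !mxE; congr (_ ^+ 2); ring.
by rewrite gram_sqdist !Xii => ->; field.
Qed.

End Gram.

Section Bbar.
Variables (R : realType) (n : nat) (G : rel 'I_n) (k : R).
Hypothesis hk : 1 < k.

Lemma k2_sub1_gt0 : 0 < k ^+ 2 - 1.
Proof. by rewrite subr_gt0 expr2 (lt_trans hk) // ltr_pMr // (lt_trans ltr01 hk). Qed.

Lemma BbarE i j :
  Bbar G k i j = if i == j then (k ^+ 2 - 1)^-1 else - (G i j)%:R.
Proof.
have k2_neq0 := lt0r_neq0 k2_sub1_gt0.
rewrite !mxE; case: eqP => _; first by rewrite add0r mulr1.
by case: (G i j) => /=; [field | rewrite addNr mulr0 oppr0].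
Qed.

Lemma Bbar_perp_const (g : bool) (w : 'cV[R]_n) :
  (forall i j, i != j -> G i j = g) -> perp1 w ->
  Bbar G k *m w = ((k ^+ 2 - 1)^-1 + g%:R) *: w.
Proof.
move=> Gg wp; have -> : Bbar G k = ((k ^+ 2 - 1)^-1 + g%:R)%:M - g%:R *: Jmx R n.
  apply/matrixP => i j; rewrite BbarE !mxE mulr1.
  by case: eqVneq => [_|/Gg ->] /=; rewrite ?mulr1n ?mulr0n; ring.
by rewrite mulmxBl mul_scalar_mx -scalemxAl JmxE -mulmxA wp mulmx0 scaler0 subr0.
Qed.

Lemma Bbar_ker_edges (w : 'cV[R]_n) : w != 0 -> perp1 w -> Bbar G k *m w = 0 ->
  (exists i j, i != j /\ G i j) /\ (exists i j, i != j /\ ~~ G i j).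
Proof.
move=> w_neq0 wp Bw0.
have pair_neq g : exists i j, i != j /\ G i j != g.
  have /existsP [i /existsP [j /andP [ij Gij]]] :
      [exists i, exists j, (i != j) && (G i j != g)]; last by exists i, j.
  apply: contraT => /existsPn noG; move: Bw0.
  rewrite (@Bbar_perp_const g) => [/eqP|i j ij|//].
    rewrite scaler_eq0 (negPf w_neq0) orbF gt_eqF //.
    by rewrite ltr_wpDr // invr_gt0 k2_sub1_gt0.
  by have /existsPn/(_ j) := noG i; rewrite ij => /negPn/eqP.
have [[i [j [ij Gij]]] [i' [j' [ij' Gij']]]] := (pair_neq false, pair_neq true).
split; [exists i, j | exists i', j']; split=> //.
  by case: (G i j) Gij.
by case: (G i' j') Gij'.
Qed.

Definition Bbar_gram m :=
  exists (r : R) (X : 'M[R]_(n, m)), r *: Jmx R n + Bbar G k = X *m X^T.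

Lemma Bbar_gram_ker m : (m.+1 < n)%N -> Bbar_gram m ->
  exists w, [/\ w != 0, perp1 w & Bbar G k *m w = 0].
Proof.
move=> lt_mn [r [X BE]].
have [w w_neq0] : exists2 w : 'cV_n, w != 0 & col_mx X^T (ones R n)^T *m w = 0.
  by apply: exists_ker_neq0; rewrite addn1.
rewrite mul_col_mx -col_mx0 => /eq_col_mx [Xw wp].
exists w; split=> //.
have : (r *: Jmx R n + Bbar G k) *m w = 0 by rewrite BE -mulmxA Xw mulmx0.
by rewrite mulmxDl -scalemxAl JmxE -mulmxA wp mulmx0 scaler0 add0r.
Qed.

Lemma Bbar_gram_perp_ge0 m : Bbar_gram m ->
  forall w, perp1 w -> 0 <= qform (Bbar G k) w.
Proof.
move=> [r [X BE]] w wp; have := (psd_gram X).2 w.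
by rewrite -BE qformD qformZ qformJ wp mxE expr0n /= mulr0 add0r.
Qed.

Lemma Bbar_gram_psd m : Bbar_gram m ->
  exists r0 : R, forall r, r0 <= r -> psd (r *: Jmx R n + Bbar G k).
Proof.
move=> [r0 [X BE]]; exists r0 => r le_r0r.
rewrite -(subrK r0 r) scalerDl -addrA BE.
by apply: psdD; [apply: psdZ; [rewrite subr_ge0 | exact: psdJ] | exact: psd_gram].
Qed.

Lemma Bbar_gram_of_psd :
  (exists (w : 'cV[R]_n) (gamma : R),
      [/\ w != 0, perp1 w & Bbar G k *m w = gamma *: ones R n]) ->
  (exists r0 : R, forall r, r0 <= r -> psd (r *: Jmx R n + Bbar G k)) ->
  Bbar_gram n.-2.
Proof.
move=> [w [g [w_neq0 wp Bw]]] [r0 /(_ r0 (lexx r0)) psdF].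
set B := Bbar G k.
have Jw : Jmx R n *m w = 0 by rewrite JmxE -mulmxA wp mulmx0.
have Fw : (r0 *: Jmx R n + B) *m w = g *: ones R n.
  by rewrite mulmxDl -scalemxAl Jw scaler0 add0r.
have Bw0 : B *m w = 0.
  rewrite Bw -Fw psd_qform_eq0 // /qform -mulmxA Fw -scalemxAr.
  by rewrite [(_ *: _ : 'M_1) _ _]mxE dotC wp mxE mulr0.
have ones_neq0 : ones R n != 0.
  have /matrix0Pn [i [j _]] := w_neq0.
  by apply/matrix0Pn; exists i, j; rewrite mxE oner_eq0.
have [t [y []]] := psd_sub_rank1_ker psdF ones_neq0.
rewrite -JmxE -addrAC -scalerBl; set P := _ + B => psdP Py y1.
have Pw : P *m w = 0 by rewrite mulmxDl -scalemxAl Jw scaler0 add0r.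
have KP : col_mx w^T y^T *m P = 0.
  by rewrite mul_col_mx -psdP.1 -!trmx_mul Pw Py trmx0 col_mx0.
have := mxrank_mul_min (col_mx w^T y^T) P.
rewrite KP mxrank0 (eqP (row_free_col_pair w_neq0 wp y1)) leqn0 subn_eq0 => rkP.
have [X PE] : exists X : 'M_(n, n.-2), P = X *m X^T.
  by apply: psd_factor psdP _; lia.
by exists (r0 - t), X.
Qed.

End Bbar.

Section Representation.
Variables (R : realType) (d : nat) (G : rel 'I_d.+2) (k : R).
Hypothesis hk : 1 < k.

Lemma Bbar_gram_of_rep : spherical_rep G k -> Bbar_gram G k d.
Proof.
move=> [p [a1 [a2 [[_ _ dist12 _ [i2 [j2 [_ d2]]]] ratio [c [rho [_ onc]]] Gdist]]]].
have a2_gt0 : 0 < a2.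
  rewrite lt_def -d2 sqrtr_ge0 andbT d2; apply: contraTneq hk => a20.
  by rewrite -ratio a20 invr0 mulr0 ltr10.
have distE i j : i != j -> edist (p i) (p j) = if G i j then k * a2 else a2.
  move=> ij; rewrite -ratio divfK ?gt_eqF //.
  case Gij: (G i j); first exact/(Gdist _ _ ij).
  by case: (dist12 _ _ ij) => // /(Gdist _ _ ij); rewrite Gij.
have k2_gt0 := k2_sub1_gt0 hk.
set beta := a2 ^+ 2 * (k ^+ 2 - 1) / 2.
have beta_gt0 : 0 < beta by rewrite divr_gt0 ?mulr_gt0 ?exprn_gt0.
exists ((rho ^+ 2 - a2 ^+ 2 / 2) / beta).
exists ((Num.sqrt beta)^-1 *: \matrix_(i, l) (p i 0 l - c 0 l)).
rewrite linearZ -scalemxAl /= -scalemxAr scalerA -invfM -expr2 sqr_sqrtr ?ltW //.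
apply/matrixP => i j; rewrite [RHS]mxE (sphere_gram onc) [LHS]mxE BbarE // !mxE mulr1.
case: (eqVneq i j) => [<-|ij].
  by rewrite edist_self /beta; field; rewrite !gt_eqF.
by rewrite distE // /beta; case: (G i j) => /=; field; rewrite !gt_eqF.
Qed.

Lemma rep_of_Bbar_gram : Bbar_gram G k d -> spherical_rep G k.
Proof.
move=> grG; have [w [w_neq0 wp Bw0]] := Bbar_gram_ker (ltnSn d.+1) grG.
have [[i1 [j1 [ij1 G1]]] [i0 [j0 [ij0 G0]]]] := Bbar_ker_edges hk w_neq0 wp Bw0.
case: grG => r [X BE]; set c0 := (k ^+ 2 - 1)^-1.
have c0_gt0 : 0 < c0 by rewrite invr_gt0 k2_sub1_gt0.
have PE i j : (X *m X^T) i j = r + (if i == j then c0 else - (G i j)%:R).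
  by rewrite -BE [LHS]mxE BbarE // !mxE mulr1.
have rc0_gt0 : 0 < r + c0.
  have Pii : (X *m X^T) i1 i1 = r + c0 by rewrite PE eqxx.
  rewrite lt_def -{2}Pii gram_diagE sumr_ge0 ?andbT => [|l _]; last exact: sqr_ge0.
  apply: contraTneq c0_gt0 => rc0.
  have := gram_diag_eq0 j1 (etrans Pii rc0); rewrite PE (negPf ij1) G1 /= => r1.
  by rewrite -leNgt; lra.
set a2 := Num.sqrt (2 * c0); set a1 := Num.sqrt (2 * (c0 + 1)).
have a2_gt0 : 0 < a2 by rewrite sqrtr_gt0 mulr_gt0.
have a21 : a2 < a1 by rewrite ltr_sqrt ?mulr_gt0 ?addr_gt0 // ltr_pM2l // ltrDl.
have distE i j : i != j -> edist (row i X) (row j X) = if G i j then a1 else a2.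
  move=> ij; rewrite edist_rows !PE !eqxx (negPf ij).
  by case: (G i j); congr Num.sqrt => /=; ring.
have a1E : a1 = k * a2.
  have k_ge0 : 0 <= k by rewrite ltW // (lt_trans ltr01).
  rewrite /a1 /a2 -(ger0_norm k_ge0) -sqrtr_sqr -sqrtrM ?sqr_ge0 //.
  by congr Num.sqrt; rewrite /c0; field; rewrite gt_eqF ?k2_sub1_gt0.
exists (fun i => row i X), a1, a2; split.
- split=> //.
  + move=> i j Xij; apply/eqP; apply: contraTT (a2_gt0) => ij.
    have := distE _ _ ij; rewrite Xij edist_self -leNgt.
    by case: (G i j) => ?; lra.
  + by move=> i j ij; rewrite distE //; case: (G i j); [left | right].
  + by exists i1, j1; rewrite distE // G1.
  + by exists i0, j0; rewrite distE // (negPf G0).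
- by rewrite a1E mulfK // gt_eqF.
- by exists 0, (Num.sqrt (r + c0)); split=> [|i]; rewrite ?sqrtr_gt0 // edist_row0 PE eqxx.
- move=> i j ij; rewrite distE //; case: (G i j); split=> // E.
  by move: a21; rewrite E ltxx.
Qed.

End Representation.

Theorem proposition4p1 (R : realType) (d : nat) (G : rel 'I_(d.+2))
    (Gsym : symmetric G) (Girr : irreflexive G) (k : R) (hk : 1 < k) :
  spherical_rep G k <->
  [/\ (forall w : 'cV[R]_(d.+2), perp1 w -> 0 <= qform (Bbar G k) w),
      (exists (w : 'cV[R]_(d.+2)) (gamma : R),
          [/\ w != 0, perp1 w & Bbar G k *m w = gamma *: ones R (d.+2)]),
      \det (Bbar G k) = 0 &
      (exists r0 : R, forall r : R, r0 <= r ->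
          psd (r *: Jmx R (d.+2) + Bbar G k))].
Proof.
split=> [/(Bbar_gram_of_rep hk) grG | [_ ker_w _ psd_r]]; last first.
  by apply: (rep_of_Bbar_gram hk); apply: Bbar_gram_of_psd ker_w psd_r.
have [w [w_neq0 wp Bw0]] := Bbar_gram_ker (ltnSn d.+1) grG.
split; [exact: Bbar_gram_perp_ge0 grG | | | exact: Bbar_gram_psd grG].
  by exists w, 0; rewrite scale0r.
exact: det_eq0_ker w_neq0 Bw0.
Qed.
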